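(* Let $M\in\mathcal{A}$ and let $\sigma_1,\dots,\sigma_m\in H_B(M)$, $\omega_1,\dots,\omega_m\in H_{dR}(M)^\vee$ be such that the class of $\sum_{i=1}^m\sigma_i\otimes\omega_i$ in $P^\infty(M)$ is zero. Then there exists a short exact sequence $0\to N'\xrightarrow{\iota}M^m\xrightarrow{\pi}N\to0$ in $\mathcal{A}$ such that $(\sigma_1,\dots,\sigma_m)\in H_B(N')$ and $(\omega_1,\dots,\omega_m)\in H_{dR}(N)^\vee$ (via the identifications below).
   Context: Let $K\subseteq\mathbb{C}$ be a subfield and $\mathcal{A}$ a $\mathbb{Q}$-linear abelian category. A fiber functor over a field $F\supseteq\mathbb{Q}$ is a $\mathbb{Q}$-linear, exact, faithful covariant functor from $\mathcal{A}$ to finite-dimensional $F$-vector spaces. $H_B$ is a fiber functor over $\mathbb{Q}$ and $H_{dR}$ a fiber functor over $K$; $V^\vee$ is the $K$-dual, and $\alpha^\vee$ denotes the dual of $H_{dR}(\alpha)$. $H_B(M)\otimes_{\mathbb{Q}}H_{dR}(M)^\vee$ is a $K$-vector space via the second factor. For a short exact sequence $0\to N'\xrightarrow{\iota}M^m\xrightarrow{\pi}N\to0$, an element of $H_B(N')$ is regarded via the injection $H_B(\iota)$ as an element $(\sigma_i)$ of $H_B(M^m)=H_B(M)^m$, and an element of $H_{dR}(N)^\vee$ is regarded via the injection $\pi^\vee$ as an element $(\omega_i)$ of $H_{dR}(M^m)^\vee=(H_{dR}(M)^\vee)^m$. For $k\ge1$, the space of formal periods of depth $k$, $P^k(M)$,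 is the quotient of $H_B(M)\otimes_{\mathbb{Q}}H_{dR}(M)^\vee$ by the $K$-subspace spanned by all elements $\sum_{i=1}^m\sigma_i\otimes\omega_i$ where $m\le k$, $0\to N'\to M^m\to N\to0$ is exact, $(\sigma_i)\in H_B(N')$ and $(\omega_i)\in H_{dR}(N)^\vee$. $P^\infty(M)$ is the quotient by the union (over all $k$) of these increasing subspaces, i.e. $P^\infty(M)=P^k(M)$ for all sufficiently large $k$. *)

From HB Require Import structures.
From mathcomp Require Import all_boot all_order all_algebra.
From mathcomp Require Import reals complex.

Set Implicit Arguments.
Unset Strict Implicit.
Unset Printing Implicit Defensive.

Import Order.TTheory GRing.Theory Num.Theory.
Local Open Scope ring_scope.

Record qcat := QCat {
  cobj : Type;
  chom : cobj -> cobj -> lmodType rat;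
  cid : forall X : cobj, chom X X;
  ccomp : forall X Y Z : cobj, chom Y Z -> chom X Y -> chom X Z
}.
Arguments cid {_} X.
Arguments ccomp {_ X Y Z} f g.

Section Abelian.
Variable C : qcat.

Definition is_qlinear_cat : Prop :=
  [/\ (forall (X Y Z W : cobj C) (f : chom Z W) (g : chom Y Z) (h : chom X Y),
          ccomp f (ccomp g h) = ccomp (ccomp f g) h),
      (forall (X Y : cobj C) (f : chom X Y), ccomp (cid Y) f = f),
      (forall (X Y : cobj C) (f : chom X Y), ccomp f (cid X) = f),
      (forall (X Y Z : cobj C) (h : chom X Y) (a : rat) (f g : chom Y Z),
          ccomp (a *: f + g) h = a *: ccomp f h + ccomp g h) &
      (forall (X Y Z : cobj C) (f : chom Y Z) (a : rat) (g h : chom X Y),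
          ccomp f (a *: g + h) = a *: ccomp f g + ccomp f h)].

Definition is_kernel (X Y K : cobj C) (f : chom X Y) (k : chom K X) : Prop :=
  ccomp f k = 0 /\
  forall (W : cobj C) (g : chom W X), ccomp f g = 0 ->
    exists! h : chom W K, ccomp k h = g.

Definition is_cokernel (X Y Q : cobj C) (f : chom X Y) (q : chom Y Q) : Prop :=
  ccomp q f = 0 /\
  forall (W : cobj C) (g : chom Y W), ccomp g f = 0 ->
    exists! h : chom Q W, ccomp h q = g.

Definition is_mono (X Y : cobj C) (f : chom X Y) : Prop :=
  forall (W : cobj C) (g : chom W X), ccomp f g = 0 -> g = 0.

Definition is_epi (X Y : cobj C) (f : chom X Y) : Prop :=
  forall (W : cobj C) (g : chom Y W), ccomp g f = 0 -> g = 0.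

Definition is_biprod (X : cobj C) (m : nat) (P : cobj C)
    (inj : 'I_m -> chom X P) (prj : 'I_m -> chom P X) : Prop :=
  (forall i j : 'I_m, ccomp (prj i) (inj j) = if i == j then cid X else 0) /\
  \sum_(i < m) ccomp (inj i) (prj i) = cid P.

Definition is_biprod2 (X Y P : cobj C) (i1 : chom X P) (i2 : chom Y P)
    (p1 : chom P X) (p2 : chom P Y) : Prop :=
  [/\ ccomp p1 i1 = cid X, ccomp p2 i2 = cid Y, ccomp p1 i2 = 0,
      ccomp p2 i1 = 0 & ccomp i1 p1 + ccomp i2 p2 = cid P].

Definition is_qabelian : Prop :=
  [/\ is_qlinear_cat,
      (exists Z : cobj C, cid Z = 0),
      (forall X Y : cobj C, exists (P : cobj C) (i1 : chom X P) (i2 : chom Y P)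
          (p1 : chom P X) (p2 : chom P Y), is_biprod2 i1 i2 p1 p2),
      (forall (X Y : cobj C) (f : chom X Y), exists (K : cobj C) (k : chom K X),
          is_kernel f k) /\
      (forall (X Y : cobj C) (f : chom X Y), exists (Q : cobj C) (q : chom Y Q),
          is_cokernel f q) &
     ((forall (X Y : cobj C) (f : chom X Y), is_mono f ->
          exists (Z : cobj C) (g : chom Y Z), is_kernel g f) /\
      (forall (X Y : cobj C) (f : chom X Y), is_epi f ->
          exists (Z : cobj C) (g : chom Z X), is_cokernel g f))].

Definition is_ses (A B D : cobj C) (i : chom A B) (p : chom B D) : Prop :=
  is_kernel p i /\ is_cokernel i p.

End Abelian.

Record qfunctor (C : qcat) (F : fieldType) := QFunctor {
  fob : cobj C -> vectType F;
  fmor : forall X Y : cobj C, chom X Y -> 'Hom(fob X, fob Y)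
}.
Arguments fob {_ _} _ X.
Arguments fmor {_ _} _ {X Y} f.

(* Q-linear, exact, faithful, covariant functor to finite-dimensional
   F-vector spaces (finite dimensionality is built into vectType). *)
Definition is_fiber_functor (C : qcat) (F : fieldType) (H : qfunctor C F) : Prop :=
  [/\ (forall (X Y : cobj C) (a : rat) (f g : chom X Y),
          fmor H (a *: f + g) = ratr a *: fmor H f + fmor H g),
      (forall X : cobj C, fmor H (cid X) = \1%VF),
      (forall (X Y Z : cobj C) (f : chom Y Z) (g : chom X Y),
          fmor H (ccomp f g) = (fmor H f \o fmor H g)%VF),
      (forall (X Y : cobj C) (f : chom X Y), fmor H f = 0 -> f = 0) &
      (forall (A B D : cobj C) (i : chom A B) (p : chom B D), is_ses i p ->
          [/\ lker (fmor H i) = 0%VS, limg (fmor H i) = lker (fmor H p)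
            & limg (fmor H p) = fullv])].

Definition kdual (K : fieldType) (V : vectType K) := 'Hom(V, K^o).

(* Model of the K-vector space  V (x)_Q W  for a finite-dim. Q-space V and a
   K-space W:  Q-linear maps V^* -> W, i.e. functions ('Hom(V,Q) -> W);
   the element sum_i v_i (x) w_i is  psi |-> sum_i psi(v_i) w_i.  We only
   ever use such functions up to pointwise equality. *)
Definition tens (V : vectType rat) (K : fieldType) (W : lmodType K) :=
  'Hom(V, rat^o) -> W.

Definition tsum (V : vectType rat) (K : fieldType) (W : lmodType K) (m : nat)
    (v : 'I_m -> V) (w : 'I_m -> W) : tens V W :=
  fun psi => \sum_(i < m) ratr (psi (v i)) *: w i.

Unset Implicit Arguments.
Section Periods.
Variables (C : qcat) (K : fieldType) (HB : qfunctor C rat) (HdR : qfunctor C K).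

(* The generators of the depth-k relations for M: elements
   sum_i sigma_i (x) omega_i with m <= k, an exact sequence
   0 -> N' -> M^m -> N -> 0, (sigma_i) = H_B(iota)(s), s in H_B(N'), and
   (omega_i) = pi^vee(phi), phi in H_dR(N)^vee.  M^m is any biproduct
   (inj, prj); H_B(M^m) = H_B(M)^m via the H_B(prj_i), and
   H_dR(M^m)^vee = (H_dR(M)^vee)^m via precomposition with H_dR(inj_i). *)
Definition period_gen (k : nat) (M : cobj C)
    (t : tens (fob HB M) (kdual (fob HdR M))) : Prop :=
  exists (m : nat) (P : cobj C) (inj : 'I_m -> chom M P) (prj : 'I_m -> chom P M)
         (N' N : cobj C) (iota : chom N' P) (pi : chom P N)
         (s : fob HB N') (phi : kdual (fob HdR N)),
    [/\ (m <= k)%N, is_biprod inj prj, is_ses iota pi &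
        forall psi, t psi =
          tsum (fun i => fmor HB (ccomp (prj i) iota) s)
               (fun i => (phi \o fmor HdR pi \o fmor HdR (inj i))%VF) psi].

(* t lies in the K-span of the depth-k generators (t is zero in P^k(M)). *)
Definition period_rel (k : nat) (M : cobj C)
    (t : tens (fob HB M) (kdual (fob HdR M))) : Prop :=
  exists (n : nat) (c : 'I_n -> K) (g : 'I_n -> tens (fob HB M) (kdual (fob HdR M))),
    (forall j, period_gen k M (g j)) /\
    forall psi, t psi = \sum_(j < n) c j *: g j psi.

Definition zero_in_Pinf (M : cobj C) (t : tens (fob HB M) (kdual (fob HdR M))) : Prop :=
  exists k : nat, period_rel k M t.

End Periods.
Arguments period_gen {C K} HB HdR k M t.
Arguments period_rel {C K} HB HdR k M t.
Arguments zero_in_Pinf {C K} HB HdR M t.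
Set Implicit Arguments.

From HB Require Import structures.
From mathcomp Require Import all_boot all_order all_algebra.
From mathcomp Require Import reals complex.
Import GRing.Theory Num.Theory.
Local Open Scope ring_scope.
Set Implicit Arguments.
Unset Strict Implicit.
Unset Printing Implicit Defensive.

(* Let r = dim H_B(M), fix a basis (b_a) of H_B(M) and the biproduct M^r.  The
   "universal" element u = sum_a inj_a(b_a) of H_B(M^r) turns a Q-linear
   choice of vectors v_1..v_m in H_B(M) into a morphism F_v : M^r -> M^m with
   H_B(F_v)(u) = (v_l), and a tensor t of H_B(M) (x) H_dR(M)^vee into a
   functional D(t) on H_dR(M^r), K-linear in t.
   1. For every depth-k generator t0 (coming from 0 -> N' -> M^m' -pi-> N -> 0)
      and every Z -> M^r whose H_B contains u in its image, the kernel
      Z' -> Z of Z -> M^r -> M^m' -pi-> N still carries u and D(t0) vanishes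
      on H_dR(Z'); this uses exactness of both fiber functors.
   2. Iterating over the finitely many generators spanning t yields Z with u
      in H_B(Z) and D(t) = 0 on H_dR(Z).
   3. The image factorization Z ->> I >-> M^m ->> Q of F_sigma restricted to Z
      gives the required sequence 0 -> I -> M^m -> Q -> 0: sigma is the image
      of u, and the functional (omega_l) on H_dR(M^m) factors through H_dR(Q)
      since it vanishes on the image of H_dR(I). *)

Section QLinearCategory.
Variable C : qcat.
Hypothesis HL : is_qlinear_cat C.

Lemma compA (X Y Z W : cobj C) (f : chom Z W) (g : chom Y Z) (h : chom X Y) :
  ccomp f (ccomp g h) = ccomp (ccomp f g) h.
Proof. by case: HL. Qed.

Lemma comp1l (X Y : cobj C) (f : chom X Y) : ccomp (cid Y) f = f.
Proof. by case: HL. Qed.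

Lemma compZDl (X Y Z : cobj C) (h : chom X Y) (a : rat) (f g : chom Y Z) :
  ccomp (a *: f + g) h = a *: ccomp f h + ccomp g h.
Proof. by case: HL. Qed.

Lemma compZDr (X Y Z : cobj C) (f : chom Y Z) (a : rat) (g h : chom X Y) :
  ccomp f (a *: g + h) = a *: ccomp f g + ccomp f h.
Proof. by case: HL. Qed.

Lemma comp0l (X Y Z : cobj C) (h : chom X Y) : ccomp (0 : chom Y Z) h = 0.
Proof.
have := compZDl h (-1) (0 : chom Y Z) 0.
by rewrite scaleN1r addNr => ->; rewrite scaleN1r addNr.
Qed.

Lemma comp0r (X Y Z : cobj C) (f : chom Y Z) : ccomp f (0 : chom X Y) = 0.
Proof.
have := compZDr f (-1) (0 : chom X Y) 0.
by rewrite scaleN1r addNr => ->; rewrite scaleN1r addNr.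
Qed.
Arguments comp0l {X Y Z} h.
Arguments comp0r {X Y Z} f.

Lemma compDl (X Y Z : cobj C) (h : chom X Y) (f g : chom Y Z) :
  ccomp (f + g) h = ccomp f h + ccomp g h.
Proof. by have := compZDl h 1 f g; rewrite !scale1r. Qed.

Lemma compDr (X Y Z : cobj C) (f : chom Y Z) (g h : chom X Y) :
  ccomp f (g + h) = ccomp f g + ccomp f h.
Proof. by have := compZDr f 1 g h; rewrite !scale1r. Qed.

Lemma compZl (X Y Z : cobj C) (h : chom X Y) (a : rat) (f : chom Y Z) :
  ccomp (a *: f) h = a *: ccomp f h.
Proof. by have := compZDl h a f 0; rewrite !addr0 comp0l addr0. Qed.

Lemma compZr (X Y Z : cobj C) (f : chom Y Z) (a : rat) (g : chom X Y) :
  ccomp f (a *: g) = a *: ccomp f g.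
Proof. by have := compZDr f a g 0; rewrite !addr0 comp0r addr0. Qed.

Lemma compBl (X Y Z : cobj C) (h : chom X Y) (f g : chom Y Z) :
  ccomp (f - g) h = ccomp f h - ccomp g h.
Proof. by rewrite compDl -scaleN1r compZl scaleN1r. Qed.

Lemma comp_suml (X Y Z : cobj C) (h : chom X Y) (I : Type) (r : seq I) (P : pred I)
    (F : I -> chom Y Z) :
  ccomp (\sum_(i <- r | P i) F i) h = \sum_(i <- r | P i) ccomp (F i) h.
Proof. by elim/big_rec2: _ => [|i x y _ <-]; [exact: comp0l | exact: compDl]. Qed.

Lemma comp_sumr (X Y Z : cobj C) (f : chom Y Z) (I : Type) (r : seq I) (P : pred I)
    (F : I -> chom X Y) :
  ccomp f (\sum_(i <- r | P i) F i) = \sum_(i <- r | P i) ccomp f (F i).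
Proof. by elim/big_rec2: _ => [|i x y _ <-]; [exact: comp0r | exact: compDr]. Qed.

Lemma coker_epi (X Y Q : cobj C) (f : chom X Y) (q : chom Y Q) :
  is_cokernel f q -> is_epi q.
Proof.
move=> [qf0 Hq] W g gq0.
have [h [_ Hu]] := Hq W 0 (comp0l f).
by rewrite -(Hu g gq0) -(Hu 0 (comp0l q)).
Qed.

Lemma epi_cancel (X Y W : cobj C) (q : chom X Y) (a b : chom Y W) :
  is_epi q -> ccomp a q = ccomp b q -> a = b.
Proof.
move=> eq_ e; apply/eqP; rewrite -subr_eq0; apply/eqP/eq_.
by rewrite compBl e subrr.
Qed.

Lemma epi_comp (X Y Z : cobj C) (e1 : chom X Y) (e2 : chom Y Z) :
  is_epi e1 -> is_epi e2 -> is_epi (ccomp e2 e1).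
Proof. by move=> h1 h2 W g; rewrite compA => /h1; exact: h2. Qed.

Lemma ker_of_coker (X Y K Q : cobj C) (f : chom X Y) (k : chom K X) (c : chom X Q) :
  is_kernel f k -> is_cokernel k c -> is_kernel c k.
Proof.
move=> [fk0 Hk] [ck0 Hc]; split=> // W g cg0.
have [t [tc _]] := Hc _ f fk0.
by apply: Hk; rewrite -tc -compA cg0 comp0r.
Qed.

Lemma biprod_extend (X P Q : cobj C) (n : nat)
    (inj : 'I_n -> chom X P) (prj : 'I_n -> chom P X)
    (i1 : chom P Q) (i2 : chom X Q) (p1 : chom Q P) (p2 : chom Q X) :
  is_biprod inj prj -> is_biprod2 i1 i2 p1 p2 ->
  exists (inj' : 'I_n.+1 -> chom X Q) (prj' : 'I_n.+1 -> chom Q X),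
    is_biprod inj' prj'.
Proof.
move=> [H1 H2] [e11 e22 e12 e21 eid].
pose inj' (i : 'I_n.+1) :=
  if unlift ord_max i is Some j then ccomp i1 (inj j) else i2.
pose prj' (i : 'I_n.+1) :=
  if unlift ord_max i is Some j then ccomp (prj j) p1 else p2.
exists inj', prj'; split.
  move=> i j; rewrite /inj' /prj'.
  case: (unliftP ord_max i) => [i0 ->|->]; case: (unliftP ord_max j) => [j0 ->|->].
  - rewrite (inj_eq (@lift_inj _ ord_max)) -compA (compA p1) e11 comp1l; exact: H1.
  - by rewrite -compA e12 comp0r eq_sym (negbTE (neq_lift _ _)).
  - by rewrite compA e21 comp0l (negbTE (neq_lift _ _)).
  - by rewrite eqxx.
rewrite big_ord_recr /= -eid; congr (_ + _); last by rewrite /inj' /prj' unlift_none.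
rewrite -[in RHS](comp1l p1) -H2 comp_suml comp_sumr; apply: eq_bigr => i _.
have -> : widen_ord (leqnSn n) i = lift ord_max i.
  by apply: val_inj; rewrite /= /bump leqNgt ltn_ord.
by rewrite /inj' /prj' liftK -!compA.
Qed.

End QLinearCategory.

Arguments comp0l {C} HL {X Y Z} h.
Arguments comp0r {C} HL {X Y Z} f.

Section QAbelianCategory.
Variable C : qcat.
Hypothesis HA : is_qabelian C.
Let HL : is_qlinear_cat C. Proof. by case: HA. Qed.

Lemma epi_coker (X Y K : cobj C) (e : chom X Y) (k : chom K X) :
  is_epi e -> is_kernel e k -> is_cokernel k e.
Proof.
move=> ee [ek0 Hk]; case: HA => _ _ _ _ [_ Hepi].
have [Z [a [ea0 Ha]]] := Hepi _ _ e ee.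
split=> // W g gk0.
have [v [kv _]] := Hk _ a ea0.
by apply: Ha; rewrite -kv (compA HL) gk0 comp0l.
Qed.

Lemma mono_ker (X Y Q : cobj C) (m : chom X Y) (q : chom Y Q) :
  is_mono m -> is_cokernel m q -> is_kernel q m.
Proof.
move=> mm [qm0 Hq]; case: HA => _ _ _ _ [Hmono _].
have [Z [a [am0 Ha]]] := Hmono _ _ m mm.
split=> // W g qg0.
have [v [vq _]] := Hq _ a am0.
by apply: Ha; rewrite -vq -(compA HL) qg0 comp0r.
Qed.

Lemma coimage_mono (X Y Kh I : cobj C) (h : chom X Y) (k : chom Kh X)
    (c : chom X I) (m : chom I Y) :
  is_kernel h k -> is_cokernel k c -> ccomp m c = h -> is_mono m.
Proof.
case: HA => _ _ _ [Hker Hcok] _ Kk Cc mc W g mg0.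
have epic := coker_epi HL Cc.
have [E [e Ce]] := Hcok _ _ g.
have [m' [m'e _]] := Ce.2 _ m mg0.
have [K3 [k3 Kk3]] := Hker _ _ (ccomp e c).
have Ck3 := epi_coker (epi_comp HL epic (coker_epi HL Ce)) Kk3.
have hk3 : ccomp h k3 = 0.
  by rewrite -mc -m'e -!(compA HL) (compA HL e) Kk3.1 comp0r.
have [v [kv _]] := Kk.2 _ _ hk3.
have ck3 : ccomp c k3 = 0 by rewrite -kv (compA HL) Cc.1 comp0l.
have [w [wec _]] := Ck3.2 _ _ ck3.
have we1 : ccomp w e = cid I.
  by apply: (epi_cancel HL epic); rewrite (comp1l HL) -(compA HL).
by rewrite -(comp1l HL g) -we1 -(compA HL) Ce.1 comp0r.
Qed.

Lemma image_fact (X Y : cobj C) (h : chom X Y) :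
  exists (Kh I Q : cobj C) (k : chom Kh X) (c : chom X I) (m : chom I Y) (q : chom Y Q),
    [/\ is_ses k c, is_ses m q & h = ccomp m c].
Proof.
have [_ _ _ [Hker Hcok] _] := HA.
have [Kh [k Kk]] := Hker _ _ h.
have [I [c Cc]] := Hcok _ _ k.
have [m [mc _]] := Cc.2 _ h Kk.1.
have [Q [q Cq]] := Hcok _ _ m.
exists Kh, I, Q, k, c, m, q; split => //.
- by split=> //; exact: ker_of_coker Kk Cc.
- by split=> //; apply: mono_ker Cq; exact: coimage_mono Kk Cc mc.
Qed.

Lemma biprod_pow (X : cobj C) (n : nat) :
  exists (P : cobj C) (inj : 'I_n -> chom X P) (prj : 'I_n -> chom P X),
    is_biprod inj prj.
Proof.
have [_ [Z Z0] Hbi _ _] := HA.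
elim: n => [|n [P [inj [prj bp]]]].
  exists Z, (fun _ => 0), (fun _ => 0); split; first by case.
  by rewrite big_ord0 Z0.
have [Q [i1 [i2 [p1 [p2 bp2]]]]] := Hbi P X.
by exists Q; exact: biprod_extend bp bp2.
Qed.

End QAbelianCategory.

(* Values of the canonical map rat -> F needed for fiber functors over an
   arbitrary field F (where ratr need not be additive). *)
Lemma ratr1 (F : fieldType) : ratr 1 = 1 :> F.
Proof. by rewrite /ratr (_ : numq 1 = 1) // (_ : denq 1 = 1) // invr1 mulr1. Qed.

Lemma ratrN1 (F : fieldType) : ratr (-1) = -1 :> F.
Proof.
by rewrite /ratr (_ : numq (-1) = -1) // (_ : denq (-1) = 1) // invr1 mulr1 mulrN1z.
Qed.

Lemma ratr_rat (a : rat) : ratr a = a.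
Proof. by rewrite /ratr divq_num_den. Qed.

Section FiberFunctor.
Variables (C : qcat) (F : fieldType) (H : qfunctor C F).
Hypothesis HF : is_fiber_functor H.

Lemma fmor_comp (X Y Z : cobj C) (f : chom Y Z) (g : chom X Y) :
  fmor H (ccomp f g) = (fmor H f \o fmor H g)%VF.
Proof. by case: HF. Qed.

Lemma fmor_compE (X Y Z : cobj C) (f : chom Y Z) (g : chom X Y) x :
  fmor H (ccomp f g) x = fmor H f (fmor H g x).
Proof. by rewrite fmor_comp comp_lfunE. Qed.

Lemma fmor_id (X : cobj C) : fmor H (cid X) = \1%VF.
Proof. by case: HF. Qed.

Lemma fmorZD (X Y : cobj C) (a : rat) (f g : chom X Y) :
  fmor H (a *: f + g) = ratr a *: fmor H f + fmor H g.
Proof. by case: HF. Qed.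

Lemma fmor0 (X Y : cobj C) : fmor H (0 : chom X Y) = 0.
Proof.
have := fmorZD (-1) (0 : chom X Y) 0.
by rewrite scaleN1r addNr ratrN1 scaleN1r addNr.
Qed.

Lemma fmorZ (X Y : cobj C) (a : rat) (f : chom X Y) :
  fmor H (a *: f) = ratr a *: fmor H f.
Proof. by have := fmorZD a f 0; rewrite !addr0 fmor0 addr0. Qed.

Lemma fmor_sum (X Y : cobj C) (I : Type) (r : seq I) (P : pred I) (G : I -> chom X Y) :
  fmor H (\sum_(i <- r | P i) G i) = \sum_(i <- r | P i) fmor H (G i).
Proof.
elim/big_rec2: _ => [|i x y _ <-]; first exact: fmor0.
by have := fmorZD 1 (G i) y; rewrite scale1r ratr1 scale1r.
Qed.

Section ShortExact.
Variables (A B D : cobj C) (i : chom A B) (p : chom B D).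
Hypothesis Hses : is_ses i p.

Lemma ses_fmor : [/\ lker (fmor H i) = 0%VS, limg (fmor H i) = lker (fmor H p)
                   & limg (fmor H p) = fullv].
Proof. by case: HF => _ _ _ _; apply. Qed.

Lemma ses_inj y : fmor H i y = 0 -> y = 0.
Proof.
have [hk _ _] := ses_fmor => iy.
have : y \in lker (fmor H i) by rewrite memv_ker iy.
by rewrite hk memv0 => /eqP.
Qed.

Lemma ses_mid x : fmor H p x = 0 -> exists y, fmor H i y = x.
Proof.
have [_ he _] := ses_fmor => px.
have : x \in limg (fmor H i) by rewrite he memv_ker px.
by case/memv_imgP => y _ ->; exists y.
Qed.

Lemma ses_surj y : exists x, fmor H p x = y.
Proof.
have [_ _ hs] := ses_fmor.
have : y \in limg (fmor H p) by rewrite hs memvf.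
by case/memv_imgP => x _ ->; exists x.
Qed.

Lemma ses_comp0 x : fmor H p (fmor H i x) = 0.
Proof. by case: Hses => -[pi0 _] _; rewrite -fmor_compE pi0 fmor0 zero_lfunE. Qed.

End ShortExact.

Lemma image_fact_ker (X Y Kh I Q : cobj C) (h : chom X Y) (k : chom Kh X)
    (c : chom X I) (m : chom I Y) (q : chom Y Q) :
  is_ses k c -> is_ses m q -> h = ccomp m c ->
  forall x, fmor H h x = 0 -> exists y, fmor H k y = x.
Proof.
move=> s1 s2 -> x; rewrite fmor_compE => /(ses_inj s2) cx.
exact: ses_mid s1 x cx.
Qed.

Lemma fmor_biprod_decomp (X P : cobj C) (n : nat)
    (inj : 'I_n -> chom X P) (prj : 'I_n -> chom P X) :
  is_biprod inj prj -> forall x, x = \sum_l fmor H (inj l) (fmor H (prj l) x).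
Proof.
move=> [_ H2] x.
rewrite -[x in LHS](id_lfunE x) -fmor_id -H2 fmor_sum sum_lfunE.
by apply: eq_bigr => l _; rewrite fmor_compE.
Qed.

Lemma fmor_prj_inj (X P : cobj C) (n : nat)
    (inj : 'I_n -> chom X P) (prj : 'I_n -> chom P X) (i j : 'I_n) x :
  is_biprod inj prj -> fmor H (prj i) (fmor H (inj j) x) = if i == j then x else 0.
Proof.
move=> [H1 _]; rewrite -fmor_compE H1.
by case: eqP => _; rewrite ?fmor_id ?id_lfunE ?fmor0 ?zero_lfunE.
Qed.

Lemma biprod_functional_component (X P : cobj C) (n : nat)
    (inj : 'I_n -> chom X P) (prj : 'I_n -> chom P X) (w : 'I_n -> 'Hom(fob H X, F^o)) i :
  is_biprod inj prj -> ((\sum_l (w l \o fmor H (prj l))) \o fmor H (inj i))%VF = w i.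
Proof.
move=> bp; apply/lfunP => y; rewrite comp_lfunE sum_lfunE (bigD1 i) //=.
rewrite big1 ?addr0 => [|j ji]; rewrite comp_lfunE fmor_prj_inj //.
  by rewrite eqxx.
by rewrite (negbTE ji) linear0.
Qed.

End FiberFunctor.

Lemma factor_functional (K : fieldType) (U W : vectType K) (f : 'Hom(U, W))
    (w : 'Hom(U, K^o)) :
  (forall x, f x = 0 -> w x = 0) -> exists phi : 'Hom(W, K^o), (phi \o f)%VF = w.
Proof.
move=> hw; exists (w \o f^-1)%VF; apply/lfunP => x; rewrite !comp_lfunE.
have e : f (f^-1%VF (f x) - x) = 0.
  by rewrite linearB /= limg_lfunVK ?subrr // memv_img ?memvf.
by have /eqP := hw _ e; rewrite linearB /= subr_eq0 => /eqP.
Qed.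

Section UniversalElement.
Variables (C : qcat) (K : fieldType) (HB : qfunctor C rat) (HdR : qfunctor C K).
Hypotheses (HA : is_qabelian C) (HBf : is_fiber_functor HB) (HdRf : is_fiber_functor HdR).
Let HL : is_qlinear_cat C. Proof. by case: HA. Qed.

Variable M : cobj C.
Local Notation V := (fob HB M).
Local Notation tensM := (tens V (kdual (fob HdR M))).
Local Notation r := (\dim (fullv : {vspace V})).
Local Notation bas := (vbasis (fullv : {vspace V})).

Variables (Pr : cobj C) (injr : 'I_r -> chom M Pr) (prjr : 'I_r -> chom Pr M).
Hypothesis Hr : is_biprod injr prjr.

Definition coord_fun (a : 'I_r) : 'Hom(V, rat^o) := @linfun _ V rat^o (coord bas a).

Definition univ : fob HB Pr := \sum_a fmor HB (injr a) bas`_a.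

Definition tens_functional (t : tensM) : kdual (fob HdR Pr) :=
  \sum_a (t (coord_fun a) \o fmor HdR (prjr a))%VF.

(* For v_1..v_n in H_B(M), the morphism M^r -> M^n with matrix of rational
   coordinates coord_a(v_l); its H_B maps univ to (v_l). *)
Definition coord_mor (n : nat) (P : cobj C) (inj : 'I_n -> chom M P)
    (v : 'I_n -> V) : chom Pr P :=
  \sum_l \sum_a coord bas a (v l) *: ccomp (inj l) (prjr a).

Lemma prj_coord_mor n (P : cobj C) (inj : 'I_n -> chom M P) (prj : 'I_n -> chom P M)
    v l :
  is_biprod inj prj ->
  ccomp (prj l) (coord_mor inj v) = \sum_a coord bas a (v l) *: prjr a.
Proof.
move=> [H1 _]; rewrite /coord_mor (comp_sumr HL) (bigD1 l) //= [X in _ + X]big1 ?addr0.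
  rewrite (comp_sumr HL); apply: eq_bigr => a _.
  by rewrite (compZr HL) (compA HL) H1 eqxx (comp1l HL).
move=> i il; rewrite (comp_sumr HL) big1 // => a _.
by rewrite (compZr HL) (compA HL) H1 eq_sym (negbTE il) (comp0l HL) scaler0.
Qed.

Lemma prj_univ a : fmor HB (prjr a) univ = bas`_a.
Proof.
rewrite /univ linear_sum (bigD1 a) //= [X in _ + X]big1 ?addr0; first by rewrite fmor_prj_inj ?eqxx.
by move=> b ba; rewrite fmor_prj_inj // eq_sym (negbTE ba).
Qed.

Lemma coord_mor_univ n (P : cobj C) (inj : 'I_n -> chom M P) (prj : 'I_n -> chom P M)
    v l :
  is_biprod inj prj -> fmor HB (prj l) (fmor HB (coord_mor inj v) univ) = v l.
Proof.
move=> bp; rewrite -(fmor_compE HBf) (prj_coord_mor _ _ bp) (fmor_sum HBf) sum_lfunE.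
rewrite [RHS](@coord_vbasis _ _ (v l) fullv) ?memvf //; apply: eq_bigr => a _.
by rewrite (fmorZ HBf) scale_lfunE ratr_rat prj_univ.
Qed.

Lemma tens_functional_tsum n (P : cobj C) (inj : 'I_n -> chom M P)
    (prj : 'I_n -> chom P M) (v : 'I_n -> V) (w : 'I_n -> kdual (fob HdR M)) :
  is_biprod inj prj ->
  tens_functional (tsum v w) =
    ((\sum_l (w l \o fmor HdR (prj l))) \o fmor HdR (coord_mor inj v))%VF.
Proof.
move=> bp; apply/lfunP => x.
rewrite /tens_functional comp_lfunE !sum_lfunE /tsum.
under eq_bigr do rewrite comp_lfunE sum_lfunE.
under [RHS]eq_bigr do rewrite comp_lfunE -(fmor_compE HdRf) (prj_coord_mor _ _ bp)
   (fmor_sum HdRf) sum_lfunE linear_sum.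
rewrite exchange_big /=; apply: eq_bigr => a _; apply: eq_bigr => l _.
by rewrite scale_lfunE (fmorZ HdRf) scale_lfunE linearZ /= /coord_fun lfunE.
Qed.

Lemma tens_functional_span n (c : 'I_n -> K) (g : 'I_n -> tensM) (t : tensM) :
  (forall psi, t psi = \sum_(j < n) c j *: g j psi) ->
  tens_functional t = \sum_j c j *: tens_functional (g j).
Proof.
move=> e; apply/lfunP => x; rewrite /tens_functional sum_lfunE.
under eq_bigr do rewrite comp_lfunE e sum_lfunE.
rewrite sum_lfunE exchange_big /=; apply: eq_bigr => j _.
rewrite scale_lfunE sum_lfunE scaler_sumr; apply: eq_bigr => a _.
by rewrite comp_lfunE scale_lfunE.
Qed.

Definition annihilates (t : tensM) (Z : cobj C) (kZ : chom Z Pr) : Prop :=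
  (tens_functional t \o fmor HdR kZ)%VF = 0.

Definition carries_univ (Z : cobj C) (kZ : chom Z Pr) : Prop :=
  exists z, fmor HB kZ z = univ.

Lemma annihilates_comp t (Z Z' : cobj C) (kZ : chom Z Pr) (k : chom Z' Z) :
  annihilates t kZ -> annihilates t (ccomp kZ k).
Proof. by rewrite /annihilates (fmor_comp HdRf) comp_lfunA => ->; rewrite comp_lfun0l. Qed.

(* Step 1: a depth-k generator t0 = sum_i H_B(prj_i iota)(s) (x) phi o H_dR(pi inj_i)
   is annihilated by the kernel of Z -> M^r -> M^m' -pi-> N, which still
   carries univ because H_B(pi)(H_B(iota)(s)) = 0. *)
Lemma refine_by_gen k t0 (Z : cobj C) (kZ : chom Z Pr) :
  period_gen HB HdR k M t0 -> carries_univ kZ ->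
  exists (Z' : cobj C) (k' : chom Z' Z),
    carries_univ (ccomp kZ k') /\ annihilates t0 (ccomp kZ k').
Proof.
move=> [m' [P' [inj' [prj' [N' [N [iota [pi [s [phi [_ bp sesi et]]]]]]]]]]] [z hz].
set tau := fun i => fmor HB (ccomp (prj' i) iota) s.
set h := ccomp pi (ccomp (coord_mor inj' tau) kZ).
have [Kh [I [Q [k' [c [m0 [q [s1 s2 eh]]]]]]]] := image_fact HA h.
have hz0 : fmor HB h z = 0.
  rewrite /h !(fmor_compE HBf) hz (fmor_biprod_decomp HBf bp (fmor HB _ univ)).
  under eq_bigr do rewrite (coord_mor_univ _ _ bp) /tau (fmor_compE HBf).
  by rewrite -(fmor_biprod_decomp HBf bp) (ses_comp0 HBf sesi).
have [z' hz'] := image_fact_ker HBf s1 s2 eh hz0.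
exists Kh, k'; split; first by exists z'; rewrite (fmor_compE HBf) hz'.
rewrite /annihilates.
have -> : tens_functional t0 = tens_functional (tsum tau
    (fun i => (phi \o fmor HdR pi \o fmor HdR (inj' i))%VF)).
  by apply: eq_bigr => a _; rewrite et.
rewrite (tens_functional_tsum _ _ bp); apply/lfunP => y.
rewrite zero_lfunE !comp_lfunE sum_lfunE.
under eq_bigr do rewrite !comp_lfunE.
rewrite -linear_sum -linear_sum /= -(fmor_biprod_decomp HdRf bp).
rewrite -!(fmor_compE HdRf) !(compA HL) -(compA HL pi) -/h eh -(compA HL) s1.1.1.
by rewrite (comp0r HL) (fmor0 HdRf) zero_lfunE linear0.
Qed.

Lemma annihilating_subobject (t : tensM) :
  zero_in_Pinf HB HdR M t ->
  exists (Z : cobj C) (kZ : chom Z Pr), carries_univ kZ /\ annihilates t kZ.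
Proof.
move=> [k [n [c [g [hg ht]]]]].
have refine_upto i : (i <= n)%N -> exists (Z : cobj C) (kZ : chom Z Pr),
    carries_univ kZ /\ forall j : 'I_n, (j < i)%N -> annihilates (g j) kZ.
  elim: i => [_|i IH lt_in].
    by exists Pr, (cid Pr); split=> //; exists univ; rewrite (fmor_id HBf) id_lfunE.
  have [Z [kZ [hu hD]]] := IH (ltnW lt_in).
  have [Z' [k' [hu' hD']]] := refine_by_gen (hg (Ordinal lt_in)) hu.
  exists Z', (ccomp kZ k'); split=> // j; rewrite ltnS leq_eqVlt => /orP [/eqP ej | ji].
    by have -> : j = Ordinal lt_in by apply: val_inj.
  exact/annihilates_comp/hD.
have [Z [kZ [hu hD]]] := refine_upto n (leqnn n).
exists Z, kZ; split=> //; rewrite /annihilates (tens_functional_span ht).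
apply/lfunP => y; rewrite comp_lfunE sum_lfunE zero_lfunE big1 // => j _.
by rewrite scale_lfunE -comp_lfunE hD ?zero_lfunE ?scaler0.
Qed.

Lemma ses_of_annihilating_subobject m (sigma : 'I_m -> V)
    (omega : 'I_m -> kdual (fob HdR M)) (P : cobj C) (inj : 'I_m -> chom M P)
    (prj : 'I_m -> chom P M) (Z : cobj C) (kZ : chom Z Pr) :
  is_biprod inj prj -> carries_univ kZ -> annihilates (tsum sigma omega) kZ ->
  exists (N' N : cobj C) (iota : chom N' P) (pi : chom P N),
    [/\ is_ses iota pi,
        (exists s : fob HB N', forall i, fmor HB (ccomp (prj i) iota) s = sigma i) &
        (exists phi : kdual (fob HdR N),
            forall i, (phi \o fmor HdR pi \o fmor HdR (inj i))%VF = omega i)].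
Proof.
move=> bp [z hz] hD.
set G := ccomp (coord_mor inj sigma) kZ.
have [Kh [I [Q [k [c [iota [pi [s1 s2 eG]]]]]]]] := image_fact HA G.
exists I, Q, iota, pi; split => //.
  exists (fmor HB c z) => i.
  by rewrite !(fmor_compE HBf) -(fmor_compE HBf iota) -eG (fmor_compE HBf) hz
    coord_mor_univ.
set w := (\sum_l (omega l \o fmor HdR (prj l)))%VF.
have [phi hphi] : exists phi : kdual (fob HdR Q), (phi \o fmor HdR pi)%VF = w.
  apply: factor_functional => x /(ses_mid HdRf s2) [y <-].
  have [y' <-] := ses_surj HdRf s1 y.
  rewrite -(fmor_compE HdRf) -eG (fmor_compE HdRf) -comp_lfunE /w.
  by rewrite -(tens_functional_tsum _ _ bp) -comp_lfunE hD zero_lfunE.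
by exists phi => i; rewrite hphi biprod_functional_component.
Qed.

End UniversalElement.

Theorem mainTheorem2 (R : realType) (K : fieldType) (embK : {rmorphism K -> R[i]})
    (C : qcat) (HC : is_qabelian C)
    (HB : qfunctor C rat) (HBf : is_fiber_functor HB)
    (HdR : qfunctor C K) (HdRf : is_fiber_functor HdR)
    (M : cobj C) (m : nat) (sigma : 'I_m -> fob HB M)
    (omega : 'I_m -> kdual (fob HdR M)) :
  zero_in_Pinf HB HdR M (tsum sigma omega) ->
  exists (P : cobj C) (inj : 'I_m -> chom M P) (prj : 'I_m -> chom P M),
    is_biprod inj prj /\
    exists (N' N : cobj C) (iota : chom N' P) (pi : chom P N),
      [/\ is_ses iota pi,
          (exists s : fob HB N', forall i, fmor HB (ccomp (prj i) iota) s = sigma i) &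
          (exists phi : kdual (fob HdR N),
              forall i, (phi \o fmor HdR pi \o fmor HdR (inj i))%VF = omega i)].
Proof.
move=> hzero.
have [Pr [injr [prjr Hr]]] := biprod_pow HC M (\dim (fullv : {vspace fob HB M})).
have [Z [kZ [hu hD]]] := annihilating_subobject HC HBf HdRf Hr hzero.
have [P [inj [prj bp]]] := biprod_pow HC M m.
exists P, inj, prj; split => //.
by apply: (ses_of_annihilating_subobject HC HBf HdRf Hr bp hu hD).
Qed.
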